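(* For $k\in\mathbb Z\setminus\{0\}$: (i) if $\alpha\in(0,1)$, then $(2-2^{\alpha-1})^{-1}<c^-(k)+c^+(k)\le1$; (ii) if $\alpha\in(1,2)$, then $1\le c^-(k)+c^+(k)\le(2-2^{\alpha-1})^{-1}$.
   Context: $B_\alpha$ is fractional Brownian motion with $\mathrm{Cov}(B_\alpha(t),B_\alpha(s))=\frac{|t|^\alpha+|s|^\alpha-|t-s|^\alpha}{2}$, $\alpha\in(0,2)$; $Z_\alpha(t)=\sqrt2B_\alpha(t)-|t|^\alpha$. Let $\Sigma=\begin{pmatrix}2&2-2^\alpha\\2-2^\alpha&2\end{pmatrix}$ be the covariance matrix of $(Z_\alpha(-1),Z_\alpha(1))$. For $k\in\mathbb Z$, define $(c^-(k),c^+(k))^\top=\Sigma^{-1}\big(\mathrm{Cov}(Z_\alpha(k),Z_\alpha(-1)),\mathrm{Cov}(Z_\alpha(k),Z_\alpha(1))\big)^\top$. (Equivalently, $c^-(k)+c^+(k)=\frac{2+2|k|^\alpha-(|k|-1)^\alpha-(|k|+1)^\alpha}{4-2^\alpha}$ for $k\ne0$.) *)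

From HB Require Import structures.
From mathcomp Require Import all_boot all_order all_algebra.
From mathcomp Require Import all_classical all_reals all_analysis.
Set Implicit Arguments. Unset Strict Implicit. Unset Printing Implicit Defensive.
Import Order.TTheory GRing.Theory Num.Theory.
Local Open Scope ring_scope.

Section FBM.
Variable R : realType.

(* Cov(Z_a(t), Z_a(s)) where Z_a(t) = sqrt 2 B_a(t) - |t|^a:
   = 2 Cov(B_a(t),B_a(s)) = |t|^a + |s|^a - |t-s|^a  (powR: 0 `^ a = 0 for a <> 0). *)
Definition covZ (a t s : R) : R := `|t| `^ a + `|s| `^ a - `|t - s| `^ a.

Definition ptime (i : 'I_2) : R := if i == ord0 then -1 else 1.

Definition Sigma (a : R) : 'M[R]_2 := \matrix_(i, j) covZ a (ptime i) (ptime j).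

Definition covvec (a : R) (k : int) : 'cV[R]_2 := \col_i covZ a k%:~R (ptime i).

Definition cvec (a : R) (k : int) : 'cV[R]_2 := invmx (Sigma a) *m covvec a k.

Definition cminus (a : R) (k : int) : R := cvec a k ord0 ord0.
Definition cplus (a : R) (k : int) : R := cvec a k (lift ord0 ord0) ord0.

End FBM.

From HB Require Import structures.
From mathcomp Require Import all_boot all_order all_algebra.
From mathcomp Require Import all_classical all_reals all_analysis.
From mathcomp Require Import ring lra.
Import Order.TTheory GRing.Theory Num.Theory.
Import numFieldNormedType.Exports.
Local Open Scope ring_scope.

(* Write q = 2^a and D_a(m) = (m+1)^a + (m-1)^a - 2 m^a for the second
   difference of t |-> t^a.  Since Sigma is symmetric with both row sums
   equal to 4 - q, summing the two rows of Sigma c = v gives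
       c^- + c^+ = (v_- + v_+) / (4 - q) = (2 - D_a(|k|)) / (4 - q),
   and (2 - 2^(a-1))^-1 = 2 / (4 - q).  Both claims therefore reduce to
   two facts about D_a on [1, +oo[:
   - its sign is that of a(a-1) (strict convexity/concavity of t^a, by the
     mean value theorem on t |-> (m+t)^a + (m-t)^a), and
   - D_a(m) - D_a(1) has the sign of (a-1)(a-2) (mean value theorem on
     [1, m], using D_a' = a D_(a-1) and the first fact for a - 1).
   The first section proves these facts about real powers, the second one
   computes c^- + c^+, and the theorem combines them. *)

Section SecondDifference.
Context {R : realType}.
Local Open Scope classical_set_scope.

Lemma powR_ltr_exp (b x y : R) : 1 < b -> x < y -> b `^ x < b `^ y.
Proof.
move=> b1 xy; rewrite /powR gt_eqF ?(lt_trans _ b1) // ltr_expR.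
by rewrite ltr_pM2r // ln_gt0.
Qed.

Lemma two_powR_lt4 (a : R) : a < 2 -> 2 `^ a < 4.
Proof.
move=> a2; have -> : (4 : R) = 2 `^ 2 by rewrite (@powR_mulrn R 2 2) // expr2; lra.
by rewrite powR_ltr_exp // ltr1n.
Qed.

Lemma powR_diff_sign (e u v : R) : 0 < u -> u < v -> e != 0 ->
  0 < e * (v `^ e - u `^ e).
Proof.
move=> u0 uv e0; have v0 : 0 < v := lt_trans u0 uv.
have [en|ep|ez] := ltgtP e 0; last by move: e0; rewrite ez eqxx.
- rewrite nmulr_rgt0 // subr_lt0 -[e]opprK (powRN v) (powRN u).
  rewrite ltf_pV2 ?posrE ?powR_gt0 //.
  by apply: gt0_ltr_powR; rewrite ?oppr_gt0 ?nnegrE ?ltW.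
- by rewrite pmulr_rgt0 // subr_gt0; apply: gt0_ltr_powR; rewrite ?nnegrE ?ltW.
Qed.

Lemma is_derive_powR_shift (c k y : R) : 0 < y + k ->
  is_derive y 1 (fun y => (y + k) `^ c) (c * (y + k) `^ (c - 1)).
Proof.
move=> yk; have := @is_derive1_comp _ (fun x : R => x `^ c) (shift k) y (c * (y + k) `^ (c - 1)) 1.
by rewrite mulr1; apply; [exact: is_derive1_powR | exact: is_derive_shift].
Qed.

Lemma is_derive_powR_reflect (c k y : R) : 0 < k - y ->
  is_derive y 1 (fun y => (k - y) `^ c) (- (c * (k - y) `^ (c - 1))).
Proof.
move=> ky; have := @is_derive1_comp _ (fun x : R => x `^ c) (fun y => k - y) y (c * (k - y) `^ (c - 1)) (-1).
rewrite mulrN1; apply; first exact: is_derive1_powR.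
by rewrite -sub0r; apply: is_deriveB.
Qed.

Lemma shift_at_right (x : R) : (fun y => y - x) @ x^'+ --> 0^'+.
Proof.
move=> P /=; rewrite !near_simpl !near_withinE => -[e /= e0 H].
exists e => //= y Hy yx; apply: H; last by rewrite subr_gt0.
by move: Hy; rewrite /ball_ /= sub0r normrN distrC.
Qed.

Definition second_diff (c m : R) : R := (m + 1) `^ c + (m - 1) `^ c - 2 * m `^ c.

Lemma second_diff_at1 (c : R) : 0 < c -> second_diff c 1 = 2 `^ c - 2.
Proof. by move=> c0; rewrite /second_diff powR1 subrr powR0 ?gt_eqF //; ring. Qed.

(* Strict convexity (c(c-1) > 0) or concavity (c(c-1) < 0) of t^c on
   ]0, +oo[: mean value theorem for t |-> (m + t)^c + (m - t)^c on [0, 1]. *)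
Lemma second_diff_sign (c m : R) : 1 < m -> c * (c - 1) != 0 ->
  0 < c * (c - 1) * second_diff c m.
Proof.
move=> m1 cc.
have c0 : c != 0 by apply: contraNneq cc => ->; rewrite mul0r.
have c1 : c - 1 != 0 by apply: contraNneq cc => ->; rewrite mulr0.
pose f t := (t + m) `^ c + (m - t) `^ c.
pose df t := c * (t + m) `^ (c - 1) - c * (m - t) `^ (c - 1).
have fd (t : R) : t \in `[0, 1]%R -> is_derive t 1 f (df t).
  rewrite in_itv /= => /andP[t0 t1]; apply: is_deriveD.
    by apply: is_derive_powR_shift; lra.
  by apply: is_derive_powR_reflect; lra.
have fc : {within `[0, 1], continuous f}.
  by apply: derivable_within_continuous => t /fd [].
have [xi] := MVT ltr01 (fun t ht => fd t (subset_itv_oo_cc ht)) fc.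
rewrite in_itv /= => /andP[xi0 xi1].
rewrite /f /df !add0r !subr0 mulr1 [1 + m]addrC => mvt.
have -> : second_diff c m = c * ((xi + m) `^ (c - 1) - (m - xi) `^ (c - 1)).
  by rewrite /second_diff mulrBr -mvt; ring.
have mono := powR_diff_sign (c - 1) (m - xi) (xi + m) ltac:(lra) ltac:(lra) c1.
rewrite (_ : _ * _ = c ^+ 2 * ((c - 1) * ((xi + m) `^ (c - 1) - (m - xi) `^ (c - 1)))).
  by rewrite mulr_gt0 // exprn_even_gt0.
by ring.
Qed.

Lemma is_derive_second_diff (a y : R) : 1 < y ->
  is_derive y 1 (second_diff a) (a * second_diff (a - 1) y).
Proof.
move=> y1; rewrite /second_diff.
have -> : a * ((y + 1) `^ (a - 1) + (y - 1) `^ (a - 1) - 2 * y `^ (a - 1)) =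
  a * (y + 1) `^ (a - 1) + a * (y - 1) `^ (a - 1) - 2 * (a * y `^ (a - 1)) by ring.
apply: is_deriveB; last by apply: is_deriveZ; apply: is_derive1_powR; lra.
by apply: is_deriveD; apply: is_derive_powR_shift; lra.
Qed.

Lemma second_diff_cont_at1 (a : R) : 0 < a ->
  second_diff a x @[x --> 1^'+] --> second_diff a 1.
Proof.
move=> a0; rewrite /second_diff subrr powR0 ?gt_eqF //.
have cont1 (f : R -> R) (df : R) : is_derive (1 : R) 1 f df -> f x @[x --> 1^'+] --> f 1.
  by move=> [fd _]; apply/cvg_at_right_filter/differentiable_continuous/derivable1_diffP.
apply: cvgB; first apply: cvgD.
- exact: (cont1 _ _ (is_derive_powR_shift a 1 1 ltac:(lra))).
- exact: cvg_comp (shift_at_right 1) (powR_cvg0 a0).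
- by apply: cvgM; [exact: cvg_cst | exact: (cont1 _ _ (is_derive1_powR a ltr01))].
Qed.

(* D_a is monotone on [1, +oo[, increasing iff (a-1)(a-2) > 0: mean value
   theorem on [1, m] with the derivative a D_(a-1), whose sign is known. *)
Lemma second_diff_monotone (a m : R) : 0 < a -> (a - 1) * (a - 2) != 0 ->
  1 <= m -> 0 <= (a - 1) * (a - 2) * (second_diff a m - second_diff a 1).
Proof.
move=> a0 aa; rewrite le_eqVlt => /predU1P[<-|m1]; first by rewrite subrr mulr0.
have fd (y : R) : y \in `]1, m[%R -> is_derive y 1 (second_diff a) (a * second_diff (a - 1) y).
  by rewrite in_itv /= => /andP[y1 _]; exact: is_derive_second_diff.
have fc : {within `[1, m], continuous (second_diff a)}.
  apply/continuous_within_itvP => //; split; last first.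
  - by apply/cvg_at_left_filter/differentiable_continuous/derivable1_diffP;
      have [] := is_derive_second_diff a m m1.
  - exact: second_diff_cont_at1.
  - move=> y; rewrite in_itv /= => /andP[y1 _].
    by apply/differentiable_continuous/derivable1_diffP; have [] := is_derive_second_diff a y y1.
have [xi] := MVT m1 fd fc; rewrite in_itv /= => /andP[xi1 _] ->.
have cc : (a - 1) * (a - 1 - 1) != 0 by rewrite (_ : a - 1 - 1 = a - 2) //; ring.
have := second_diff_sign (a - 1) xi xi1 cc.
rewrite (_ : (a - 1) * (a - 2) * _ = (a * (m - 1)) * ((a - 1) * (a - 1 - 1) * second_diff (a - 1) xi)).
  by move=> pos; rewrite ltW // mulr_gt0 // mulr_gt0 // subr_gt0.
by ring.
Qed.

Lemma second_diff_sign_ge1 (a m : R) : 0 < a -> a != 1 -> 1 <= m ->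
  0 < a * (a - 1) * second_diff a m.
Proof.
move=> a0 a1; rewrite le_eqVlt => /predU1P[<-|m1].
  rewrite second_diff_at1 // -[X in _ `^ a - X](@powRr1 R 2) //.
  have [lt_a1|gt_a1|] := ltgtP a 1; last by move/eqP: a1.
  - have neg : a * (a - 1) < 0 by rewrite pmulr_rlt0 // subr_lt0.
    by rewrite nmulr_rgt0 // subr_lt0 powR_ltr_exp ?ltr1n.
  - by rewrite !mulr_gt0 ?subr_gt0 ?powR_ltr_exp ?ltr1n.
by apply: second_diff_sign; rewrite // mulf_neq0 ?subr_eq0 ?lt0r_neq0.
Qed.

Lemma inv_two_sub_half_pow (a : R) : (2 - 2 `^ (a - 1))^-1 = 2 / (4 - 2 `^ a).
Proof.
rewrite powRB ?pnatr_eq0 ?implybT // powRr1 //.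
by rewrite (_ : 2 - 2 `^ a / 2 = (4 - 2 `^ a) / 2) ?invf_div //; field.
Qed.

Lemma second_diff_concave_bounds (a m : R) : 0 < a < 1 -> 1 <= m ->
  2 `^ a - 2 <= second_diff a m < 0.
Proof.
case/andP=> a0 a1 m1; apply/andP; split.
- have pos : 0 < (a - 1) * (a - 2) by rewrite nmulr_rgt0 ?subr_lt0 //; lra.
  rewrite -second_diff_at1 // -subr_ge0 -(pmulr_rge0 _ pos).
  by rewrite second_diff_monotone ?gt_eqF.
- have neg : a * (a - 1) < 0 by rewrite pmulr_rlt0 // subr_lt0.
  by rewrite -(nmulr_rgt0 _ neg) second_diff_sign_ge1 ?lt_eqF.
Qed.

Lemma second_diff_convex_bounds (a m : R) : 1 < a < 2 -> 1 <= m ->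
  0 < second_diff a m <= 2 `^ a - 2.
Proof.
case/andP=> a1 a2 m1; have a0 : 0 < a by lra.
apply/andP; split.
- have pos : 0 < a * (a - 1) by rewrite mulr_gt0 ?subr_gt0.
  by rewrite -(pmulr_rgt0 _ pos) second_diff_sign_ge1 ?gt_eqF.
- have neg : (a - 1) * (a - 2) < 0 by rewrite pmulr_rlt0 ?subr_gt0 ?subr_lt0.
  rewrite -second_diff_at1 // -subr_le0 -(nmulr_rge0 _ neg).
  by rewrite second_diff_monotone ?lt_eqF.
Qed.

End SecondDifference.

Section KrigingWeights.
Context {R : realType}.

(* Sigma has diagonal 2 and off-diagonal 2 - 2^a (this uses 0^a = 0). *)
Lemma Sigma_entries (a : R) : 0 < a ->
  Sigma a = \matrix_(i, j) (if i == j then 2 else 2 - 2 `^ a).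
Proof.
move=> a0; apply/matrixP => i j; rewrite !mxE /covZ /ptime.
case: i => [[|[|//]] ?]; case: j => [[|[|//]] ?] /=;
  rewrite ?normrN ?normr1 ?powR1 ?subrr ?normr0 ?powR0 ?gt_eqF ?subr0 //.
- by rewrite -opprD normrN ger0_norm.
- by rewrite opprK ger0_norm.
Qed.

(* det Sigma = 2^a (4 - 2^a) != 0; we exhibit the inverse (adjugate / det). *)
Lemma Sigma_unitmx (a : R) : 0 < a < 2 -> Sigma a \in unitmx.
Proof.
case/andP=> a0 a2; set q := 2 `^ a.
have q0 : 0 < q by rewrite powR_gt0.
have q4 : q < 4 by apply: two_powR_lt4.
have det0 : 4 - (2 - q) ^+ 2 != 0.
  by rewrite (_ : 4 - _ = q * (4 - q)); [rewrite mulf_neq0 ?gt_eqF ?subr_gt0 | ring].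
pose adj : 'M[R]_2 := \matrix_(i, j) (if i == j then 2 else q - 2).
suff [] : Sigma a \in unitmx /\ ((4 - (2 - q) ^+ 2)^-1 *: adj) \in unitmx by [].
apply: mulmx1_unit; rewrite Sigma_entries // -/q; apply/matrixP => i j.
rewrite !mxE !big_ord_recl big_ord0 !mxE.
by case: i => [[|[|//]] ?]; case: j => [[|[|//]] ?] /=; field.
Qed.

(* Both row sums of Sigma are 4 - 2^a, so summing the two rows of
   Sigma c = v gives (4 - 2^a)(c^- + c^+) = v_- + v_+. *)
Lemma cweights_sum_covZ (a : R) (k : int) : 0 < a < 2 ->
  cminus a k + cplus a k = (covZ a k%:~R (-1) + covZ a k%:~R 1) / (4 - 2 `^ a).
Proof.
move=> ha; have [a0 a2] := andP ha.
have E := mulKVmx (Sigma_unitmx a ha) (covvec a k).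
rewrite /cminus /cplus /cvec; move: (invmx _ *m _) E => c E.
have row (i : 'I_2) := congr1 (fun M : 'cV[R]_2 => M i ord0) E.
move: (row ord0) (row (lift ord0 ord0)).
rewrite Sigma_entries // !mxE !big_ord_recl !big_ord0 !mxE /= => <- <-.
have q4 : 4 - 2 `^ a != 0 by rewrite subr_eq0 gt_eqF // two_powR_lt4.
by field.
Qed.

(* v_- + v_+ depends on r only through |r| (reflection r |-> -r swaps the two
   terms) and equals 2 - D_a(|r|) once |r| >= 1. *)
Lemma covZ_sum_pm1 (a r : R) : 1 <= `|r| ->
  covZ a r (-1) + covZ a r 1 = 2 - second_diff a `|r|.
Proof.
move=> r1; rewrite /covZ /second_diff normrN normr1 powR1 opprK.
suff sym : `|r + 1| `^ a + `|r - 1| `^ a = (`|r| + 1) `^ a + (`|r| - 1) `^ a.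
  by rewrite -sym; ring.
have [r0|r0] := leP 0 r.
  by rewrite ger0_norm in r1 *; rewrite ?ger0_norm //; lra.
rewrite ltr0_norm // in r1 *.
rewrite ler0_norm ?ltr0_norm; try lra.
by rewrite addrC; congr (_ `^ _ + _ `^ _); ring.
Qed.

Lemma cweights_sum_second_diff (a : R) (k : int) : 1 <= `|k%:~R : R| -> 0 < a < 2 ->
  cminus a k + cplus a k = (2 - second_diff a `|k%:~R : R|) / (4 - 2 `^ a).
Proof. by move=> k1 ha; rewrite cweights_sum_covZ // covZ_sum_pm1. Qed.

End KrigingWeights.

Theorem lemma3p7 (R : realType) (a : R) (k : int) (hk : k != 0) :
  (0 < a < 1 ->
     (2 - 2 `^ (a - 1))^-1 < cminus a k + cplus a k /\ cminus a k + cplus a k <= 1) /\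
  (1 < a < 2 ->
     1 <= cminus a k + cplus a k /\ cminus a k + cplus a k <= (2 - 2 `^ (a - 1))^-1).
Proof.
have k1 : 1 <= `|k%:~R : R| by rewrite norm_intr_ge1 ?intr_int ?intr_eq0.
rewrite inv_two_sub_half_pow; split => ha; have /andP[a0 a1] := ha.
- have den : 0 < 4 - 2 `^ a by rewrite subr_gt0 two_powR_lt4 //; lra.
  have /andP[D_ge D_neg] := second_diff_concave_bounds a _ ha k1.
  rewrite cweights_sum_second_diff //; last by apply/andP; split; lra.
  by rewrite ltr_pM2r ?invr_gt0 // ler_pdivrMr //; split; lra.
- have den : 0 < 4 - 2 `^ a by rewrite subr_gt0 two_powR_lt4.
  have /andP[D_pos D_le] := second_diff_convex_bounds a _ ha k1.
  rewrite cweights_sum_second_diff //; last by apply/andP; split; lra.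
  by rewrite ler_pM2r ?invr_gt0 // ler_pdivlMr //; split; lra.
Qed.
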